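(* Let $p,n\in\mathbb{N}$ with $p,n\ge1$, $r\in\mathbb{N}$ with $r\le p$, and assume $n\ge\max\{2p-\lfloor p/2\rfloor,\;2p-2\lfloor p/2\rfloor+1\}$. Then $$X^{p,r,1}=n^{2r-1}\big(T_n^{\bm\alpha}+H_n^{\bm\alpha,1}\big),$$ where $\alpha_k=(-1)^r\mathcal{N}_{2p+1}^{(2r)}(p+1-k)$, $k=0,\dots,p$.
   Context: Cardinal B-spline: $\mathcal{N}_0(t)=1$ for $t\in[0,1)$, $0$ otherwise; $\mathcal{N}_p(t)=\frac{t}{p}\mathcal{N}_{p-1}(t)+\frac{p+1-t}{p}\mathcal{N}_{p-1}(t-1)$, $p\ge1$ (support $[0,p+1]$, $C^{p-1}$). Neumann basis: for $c\in\mathbb{R}$ put $C_c(x)=\mathcal{N}_p\big(nx-c+\tfrac{p+1}{2}\big)$ (B-spline centred at $c/n$), and for $i=1,\dots,n$, $x\in[0,1]$, $$N^p_{i,1}(x)=\sum_{m\in\mathbb{Z}}\Big(C_{i-\frac12+2mn}(x)+C_{-(i-\frac12)+2mn}(x)\Big).$$ These form a basis of the $C^{p-1}$ splines of degree $p$ with breakpoints $(k+\frac12)/n$ ($p$ odd) or $k/n$ ($p$ even) whose derivatives of all odd orders $\le p$ vanish at $0$ and $1$. $X^{p,r,1}_{i,j}=\int_0^1(N^p_{i,1})^{(r)}(N^p_{j,1})^{(r)}\,\mathrm{d}x$ (piecewise derivatives if $r=p$). For $\bm\alpha\in\mathbb{R}^{p+1}$, $n\ge p+1$, with $\alpha_k=0$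 for $k>p$: $(T_n^{\bm\alpha})_{i,j}=\alpha_{|i-j|}$ and $(H_n^{\bm\alpha,1})_{i,j}=\alpha_{i+j-1}+\alpha_{2n+1-i-j}$. *)

From Stdlib Require Import Reals Lra Lia ZArith.
From Coquelicot Require Import Coquelicot.
Open Scope R_scope.

Fixpoint cardB (p : nat) (t : R) : R :=
  match p with
  | O => if Rle_dec 0 t then (if Rlt_dec t 1 then 1 else 0) else 0
  | S q => t / INR (S q) * cardB q t
           + (INR (S q) + 1 - t) / INR (S q) * cardB q (t - 1)
  end.

Definition sumZ (f : Z -> R) : R :=
  Series (fun k => f (Z.of_nat k)) + Series (fun k => f (- Z.of_nat k - 1)%Z).

Definition Cc (p n : nat) (c x : R) : R :=
  cardB p (INR n * x - c + (INR p + 1) / 2).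

(* Neumann basis N^p_{i,1}, i = 1..n (defined by the same formula on all of R). *)
Definition NeuB (p n i : nat) (x : R) : R :=
  sumZ (fun m =>
    Cc p n (INR i - 1/2 + 2 * IZR m * INR n) x
    + Cc p n (- (INR i - 1/2) + 2 * IZR m * INR n) x).

(* X^{p,r,1}_{i,j}: integral over [0,1] of the product of r-th derivatives
   (for r = p these are piecewise derivatives; the values at the finitely many
   breakpoints do not affect the integral). *)
Definition Xmat (p r n i j : nat) : R :=
  RInt (fun x => Derive_n (NeuB p n i) r x * Derive_n (NeuB p n j) r x) 0 1.

Definition alpha (p r k : nat) : R :=
  if Nat.leb k p
  then (-1) ^ r * Derive_n (cardB (2 * p + 1)) (2 * r) (INR p + 1 - INR k)
  else 0.

Definition Tmat (a : nat -> R) (i j : nat) : R :=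
  a (if Nat.leb i j then (j - i)%nat else (i - j)%nat).

Definition Hmat (a : nat -> R) (n i j : nat) : R :=
  a (i + j - 1)%nat + a (2 * n + 1 - i - j)%nat.

From Stdlib Require Import Reals ZArith Lra Lia.
From Coquelicot Require Import Coquelicot.
Open Scope R_scope.
Set Bullet Behavior "Strict Subproofs".

(* The r-th derivative of N_p is the r-th backward difference of N_{p-r}, and on [0, 1]
   the sum over m defining N^p_{i,1} reduces to three images, centred at (i - 1/2)/n,
   -(i - 1/2)/n and (2n - i + 1/2)/n, because n >= p + 1.  The substitution y = n x + p/2
   turns X^{p,r,1}_{ij} into n^{2r-1} times an integral over [p/2, n + p/2] of a product
   of two sums of three translates of f = \nabla^r N_{p-r}.  Reflecting y |-> p - y and
   y |-> 2n + p - y maps f to (-1)^r f up to a translation, which folds the nine products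
   into three integrals of f(y) f(y + z) over a whole support.  These are values of
   (-1)^r \nabla^{2r} N_{2p-2r+1} = (-1)^r N_{2p+1}^{(2r)}, by the convolution identity
     \int \nabla^u N_a(x) \nabla^v N_b(x + s) dx = (-1)^u \nabla^{u+v} N_{a+b+1}(a + u + 1 + s),
   proved by induction on a (differencing in s and integrating by parts) and then on u, v.
   Since N_0 is discontinuous, integrals are split at the integers, where the splines are
   smooth. *)

(** * Cardinal B-splines *)

Lemma cardB_succ (q : nat) (t : R) :
  cardB (S q) t
  = t / (INR q + 1) * cardB q t + (INR q + 2 - t) / (INR q + 1) * cardB q (t - 1).
Proof.
  change (cardB (S q) t) with
    (t / INR (S q) * cardB q t + (INR (S q) + 1 - t) / INR (S q) * cardB q (t - 1)).
  rewrite S_INR. do 3 f_equal. ring.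
Qed.

Lemma cardB_O (t : R) :
  cardB 0 t = if Rle_dec 0 t then (if Rlt_dec t 1 then 1 else 0) else 0.
Proof. reflexivity. Qed.

Lemma cardB_eq0_neg (p : nat) (t : R) : t < 0 -> cardB p t = 0.
Proof.
  revert t; induction p as [|q IH]; intros t Ht.
  - rewrite cardB_O. destruct (Rle_dec 0 t); [lra | reflexivity].
  - rewrite cardB_succ, !IH by lra. ring.
Qed.

Lemma cardB_eq0_ge (p : nat) (t : R) : INR p + 1 <= t -> cardB p t = 0.
Proof.
  revert t; induction p as [|q IH]; intros t Ht.
  - rewrite cardB_O. simpl in Ht.
    destruct (Rle_dec 0 t); [destruct (Rlt_dec t 1); lra | reflexivity].
  - rewrite S_INR in Ht. rewrite cardB_succ, !IH by lra. ring.
Qed.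

Lemma cardB_at0 (p : nat) : (1 <= p)%nat -> cardB p 0 = 0.
Proof.
  intros Hp. destruct p as [|q]; [lia|].
  rewrite cardB_succ, (cardB_eq0_neg q (0 - 1)) by lra. lra.
Qed.

Lemma cardB_1 (t : R) : cardB 1 t = (1 - Rabs (t - 1) + Rabs (1 - Rabs (t - 1))) / 2.
Proof.
  rewrite cardB_succ, !cardB_O. simpl INR.
  destruct (Rle_dec 0 t), (Rlt_dec t 1), (Rle_dec 0 (t - 1)), (Rlt_dec (t - 1) 1);
    unfold Rabs; repeat destruct Rcase_abs; lra.
Qed.

Definition noninteger (t : R) : Prop := forall z : Z, t <> IZR z.

Lemma noninteger_add_IZR (t : R) (z : Z) : noninteger t -> noninteger (t + IZR z).
Proof. intros H w E. apply (H (w - z)%Z). rewrite minus_IZR. lra. Qed.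

Lemma noninteger_sub1 (t : R) : noninteger t -> noninteger (t - 1).
Proof.
  intros H. replace (t - 1) with (t + IZR (-1)) by (simpl; ring).
  now apply noninteger_add_IZR.
Qed.

Lemma noninteger_IZR_sub (z : Z) (t : R) : noninteger t -> noninteger (IZR z - t).
Proof. intros H w E. apply (H (z - w)%Z). rewrite minus_IZR. lra. Qed.

Lemma locally_Rabs (t d : R) (P : R -> Prop) :
  0 < d -> (forall y, Rabs (y - t) < d -> P y) -> locally t P.
Proof. intros Hd H. exists (mkposreal d Hd). exact H. Qed.

Lemma cardB_O_locally_const (t : R) :
  noninteger t -> locally t (fun y => cardB 0 y = cardB 0 t).
Proof.
  intros H. pose proof (H 0%Z) as H0. pose proof (H 1%Z) as H1. simpl in H0, H1.
  assert (Hd : 0 < Rmin (Rabs t) (Rabs (t - 1))).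
  { apply Rmin_glb_lt; apply Rabs_pos_lt; lra. }
  apply (locally_Rabs t _ _ Hd). intros y Hy.
  pose proof (Rmin_l (Rabs t) (Rabs (t - 1))). pose proof (Rmin_r (Rabs t) (Rabs (t - 1))).
  rewrite !cardB_O. revert Hy H2 H3. unfold Rabs.
  destruct (Rle_dec 0 y), (Rle_dec 0 t), (Rlt_dec y 1), (Rlt_dec t 1);
    repeat destruct Rcase_abs; intros; lra.
Qed.

Lemma is_derive_Rmult (f g : R -> R) (x df dg : R) :
  is_derive f x df -> is_derive g x dg ->
  is_derive (fun y => f y * g y) x (df * g x + f x * dg).
Proof. intros Hf Hg. apply (is_derive_mult f g); auto. intros; apply Rmult_comm. Qed.

Lemma is_derive_Rplus (f g : R -> R) (x df dg : R) :
  is_derive f x df -> is_derive g x dg -> is_derive (fun y => f y + g y) x (df + dg).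
Proof. exact (is_derive_plus f g x df dg). Qed.

Lemma is_derive_affine (f : R -> R) (x a b d : R) :
  is_derive f (a * x + b) d -> is_derive (fun y => f (a * y + b)) x (a * d).
Proof.
  intros H. apply (is_derive_comp f (fun y => a * y + b)); [exact H|].
  auto_derive; [auto | ring].
Qed.

Lemma is_derive_shift (f : R -> R) (x c d : R) :
  is_derive f (x + c) d -> is_derive (fun y => f (y + c)) x d.
Proof.
  intros H. rewrite <- (Rmult_1_l d).
  apply (is_derive_ext (fun y => f (1 * y + c))); [intros; now rewrite Rmult_1_l|].
  apply is_derive_affine. now rewrite Rmult_1_l.
Qed.

Lemma is_derive_ext_eq (f g : R -> R) (x d d' : R) :
  (forall y, f y = g y) -> d = d' -> is_derive f x d -> is_derive g x d'.
Proof. intros Efg <-. now apply is_derive_ext. Qed.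

Lemma is_derive_cardB_noninteger (p : nat) (t : R) :
  noninteger t -> is_derive (cardB (S p)) t (cardB p t - cardB p (t - 1)).
Proof.
  revert t; induction p as [|q IH]; intros t Ht.
  - apply (is_derive_ext_loc
      (fun y => y / (INR 0 + 1) * cardB 0 t + (INR 0 + 2 - y) / (INR 0 + 1) * cardB 0 (t - 1))).
    + destruct (cardB_O_locally_const t Ht) as [e1 He1].
      destruct (cardB_O_locally_const (t - 1) (noninteger_sub1 t Ht)) as [e2 He2].
      exists (mkposreal _ (Rmin_stable_in_posreal e1 e2)). intros y Hy.
      rewrite cardB_succ, (He1 y), (He2 (y - 1)); [reflexivity | |].
      * eapply Rlt_le_trans; [|apply Rmin_r].
        revert Hy. unfold ball; simpl; unfold AbsRing_ball, minus, plus, opp; simpl.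
        intros Hy. replace (y - 1 + - (t - 1)) with (y + - t) by ring. exact Hy.
      * eapply Rlt_le_trans; [|apply Rmin_l]. exact Hy.
    + simpl INR. auto_derive; [auto|]. rewrite !cardB_O. field.
  - pose proof (pos_INR q).
    assert (Da : is_derive (fun y => y / (INR q + 1 + 1)) t (/ (INR q + 1 + 1))).
    { auto_derive; [lra | field; lra]. }
    assert (Db : is_derive (fun y => (INR q + 1 + 2 - y) / (INR q + 1 + 1)) t
                           (- / (INR q + 1 + 1))).
    { auto_derive; [lra | field; lra]. }
    assert (D1 := IH (t - 1) (noninteger_sub1 t Ht)).
    replace (t - 1) with (t + -1) in D1 by ring.
    apply is_derive_shift in D1.
    eapply is_derive_ext_eq; [| |apply is_derive_plus;
      [apply (is_derive_Rmult _ _ _ _ _ Da (IH t Ht)) | apply (is_derive_Rmult _ _ _ _ _ Db D1)]].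
    + intros y. rewrite (cardB_succ (S q)), S_INR. now replace (y + -1) with (y - 1) by ring.
    + replace (t + -1) with (t - 1) by ring. rewrite !cardB_succ. simpl; unfold plus; simpl. field. lra.
Qed.

Lemma continuous_Rplus (f g : R -> R) (x : R) :
  continuous f x -> continuous g x -> continuous (fun y => f y + g y) x.
Proof. exact (continuous_plus f g x). Qed.

Lemma continuous_Rminus (f g : R -> R) (x : R) :
  continuous f x -> continuous g x -> continuous (fun y => f y - g y) x.
Proof. exact (continuous_minus f g x). Qed.

Lemma continuous_Rmult (f g : R -> R) (x : R) :
  continuous f x -> continuous g x -> continuous (fun y => f y * g y) x.
Proof. exact (continuous_mult f g x). Qed.

Lemma continuous_affine (f : R -> R) (x a b : R) :
  continuous f (a * x + b) -> continuous (fun y => f (a * y + b)) x.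
Proof.
  intros H. apply (continuous_comp (fun y => a * y + b) f); [|exact H].
  apply continuous_Rplus; [apply continuous_Rmult|];
    auto using continuous_const, continuous_id.
Qed.

Lemma continuous_shift (f : R -> R) (x c : R) :
  continuous f (x + c) -> continuous (fun y => f (y + c)) x.
Proof.
  intros H. apply (continuous_ext (fun y => f (1 * y + c))); [intros; now rewrite Rmult_1_l|].
  apply continuous_affine. now rewrite Rmult_1_l.
Qed.

Lemma cardB_continuous (p : nat) (t : R) : continuous (cardB (S p)) t.
Proof.
  revert t; induction p as [|q IH]; intros t.
  - apply (continuous_ext (fun t => (1 - Rabs (t - 1) + Rabs (1 - Rabs (t - 1))) / 2)).
    { intros; now rewrite cardB_1. }
    assert (Cabs : continuous (fun y => Rabs (y - 1)) t).
    { apply (continuous_comp (fun y => y - 1) Rabs); [|apply continuous_Rabs].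
      apply continuous_Rminus; [apply continuous_id | apply continuous_const]. }
    apply continuous_Rmult; [|apply continuous_const].
    apply continuous_Rplus.
    + apply continuous_Rminus; [apply continuous_const | exact Cabs].
    + apply (continuous_comp (fun y => 1 - Rabs (y - 1)) Rabs); [|apply continuous_Rabs].
      apply continuous_Rminus; [apply continuous_const | exact Cabs].
  - apply (continuous_ext (fun y => y / (INR (S q) + 1) * cardB (S q) y
              + (INR (S q) + 2 - y) / (INR (S q) + 1) * cardB (S q) (y + -1))).
    { intros y. rewrite (cardB_succ (S q) y). now replace (y + -1) with (y - 1) by ring. }
    apply continuous_Rplus; apply continuous_Rmult; auto using continuous_shift.
    + apply continuous_Rmult; [apply continuous_id | apply continuous_const].
    + apply continuous_Rmult; [|apply continuous_const].
      apply continuous_Rminus; [apply continuous_const | apply continuous_id].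
Qed.

Definition integer_free (a b : R) : Prop := forall z : Z, ~ (a < IZR z < b).

Definition piecewise_continuous (f : R -> R) : Prop :=
  forall a b, a < b -> integer_free a b ->
  exists g : R -> R, (forall x, continuous g x) /\ (forall x, a < x < b -> f x = g x).

Lemma integer_free_noninteger (a b x : R) : integer_free a b -> a < x < b -> noninteger x.
Proof. intros H Hx z ->. exact (H z Hx). Qed.

Lemma piecewise_continuous_of_continuous (f : R -> R) :
  (forall x, continuous f x) -> piecewise_continuous f.
Proof. intros H a b _ _. now exists f. Qed.

Lemma piecewise_continuous_ext (f g : R -> R) :
  (forall x, f x = g x) -> piecewise_continuous f -> piecewise_continuous g.
Proof.
  intros E H a b Hab Hi. destruct (H a b Hab Hi) as [h [Ch Eh]].
  exists h. split; [exact Ch|]. intros x Hx. rewrite <- E. now apply Eh.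
Qed.

Lemma piecewise_continuous_op (op : R -> R -> R) (f g : R -> R) :
  (forall (u v : R -> R) (z : R), continuous u z -> continuous v z ->
     continuous (fun t => op (u t) (v t)) z) ->
  piecewise_continuous f -> piecewise_continuous g ->
  piecewise_continuous (fun x => op (f x) (g x)).
Proof.
  intros Cop Hf Hg a b Hab Hi.
  destruct (Hf a b Hab Hi) as [f1 [C1 E1]], (Hg a b Hab Hi) as [g1 [C2 E2]].
  exists (fun x => op (f1 x) (g1 x)). split; [auto|]. intros x Hx. now rewrite E1, E2.
Qed.

Lemma piecewise_continuous_plus (f g : R -> R) :
  piecewise_continuous f -> piecewise_continuous g ->
  piecewise_continuous (fun x => f x + g x).
Proof. apply piecewise_continuous_op. intros; now apply continuous_Rplus. Qed.

Lemma piecewise_continuous_minus (f g : R -> R) :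
  piecewise_continuous f -> piecewise_continuous g ->
  piecewise_continuous (fun x => f x - g x).
Proof. apply piecewise_continuous_op. intros; now apply continuous_Rminus. Qed.

Lemma piecewise_continuous_mult (f g : R -> R) :
  piecewise_continuous f -> piecewise_continuous g ->
  piecewise_continuous (fun x => f x * g x).
Proof. apply piecewise_continuous_op. intros; now apply continuous_Rmult. Qed.

Lemma piecewise_continuous_affine (f : R -> R) (u : R) (z : Z) :
  (u = 1 \/ u = -1) -> piecewise_continuous f ->
  piecewise_continuous (fun x => f (u * x + IZR z)).
Proof.
  intros Hu H a b Hab Hi.
  destruct (H (Rmin (u * a + IZR z) (u * b + IZR z)) (Rmax (u * a + IZR z) (u * b + IZR z)))
    as [g [C E]].
  - destruct Hu as [-> | ->];
      [rewrite Rmin_left, Rmax_right | rewrite Rmin_right, Rmax_left]; lra.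
  - intros w Hw. destruct Hu as [-> | ->].
    + rewrite Rmin_left, Rmax_right in Hw by lra.
      apply (Hi (w - z)%Z). rewrite minus_IZR. lra.
    + rewrite Rmin_right, Rmax_left in Hw by lra.
      apply (Hi (z - w)%Z). rewrite minus_IZR. lra.
  - exists (fun x => g (u * x + IZR z)). split; [intros; now apply continuous_affine|].
    intros x Hx. apply E. destruct Hu as [-> | ->];
      [rewrite Rmin_left, Rmax_right | rewrite Rmin_right, Rmax_left]; lra.
Qed.

Lemma piecewise_continuous_shift (f : R -> R) (z : Z) :
  piecewise_continuous f -> piecewise_continuous (fun x => f (x + IZR z)).
Proof.
  intros H. apply (piecewise_continuous_ext (fun x => f (1 * x + IZR z))).
  - intros; now rewrite Rmult_1_l.
  - apply piecewise_continuous_affine; auto.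
Qed.

Lemma piecewise_continuous_reflect (f : R -> R) (z : Z) :
  piecewise_continuous f -> piecewise_continuous (fun x => f (IZR z - x)).
Proof.
  intros H. apply (piecewise_continuous_ext (fun x => f (-1 * x + IZR z))).
  - intros; f_equal; ring.
  - apply piecewise_continuous_affine; auto.
Qed.

Lemma piecewise_continuous_cardB (p : nat) : piecewise_continuous (cardB p).
Proof.
  destruct p as [|p]; [|apply piecewise_continuous_of_continuous, cardB_continuous].
  intros a b Hab Hi. exists (fun _ => cardB 0 ((a + b) / 2)). split; [intros; apply continuous_const|].
  intros x Hx. pose proof (Hi 0%Z) as H0. pose proof (Hi 1%Z) as H1. simpl in H0, H1.
  rewrite !cardB_O.
  destruct (Rle_dec 0 x), (Rle_dec 0 ((a + b) / 2)), (Rlt_dec x 1), (Rlt_dec ((a + b) / 2) 1);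
    try reflexivity; exfalso; (apply H0 + apply H1); lra.
Qed.

Lemma integer_split_ind (P : R -> R -> Prop) :
  (forall a b c, a <= b -> b <= c -> P a b -> P b c -> P a c) ->
  (forall a b, a < b -> integer_free a b -> P a b) ->
  (forall a, P a a) ->
  forall a b, a <= b -> P a b.
Proof.
  intros Htrans Hfree Hrefl.
  assert (Hup : forall a (z : Z), a < IZR z -> IZR (up a) <= IZR z).
  { intros a z Hz. destruct (archimed a) as [H1 H2]. apply IZR_le.
    destruct (Z_lt_le_dec z (up a)) as [L|L]; [|exact L].
    assert (IZR z <= IZR (up a) - 1) by (rewrite <- minus_IZR; apply IZR_le; lia). lra. }
  assert (Short : forall a b, a <= b <= a + 1 -> P a b).
  { intros a b [H1 H2]. destruct (Req_dec a b) as [<-|E]; [apply Hrefl|].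
    destruct (archimed a) as [A1 A2].
    destruct (Rlt_dec (IZR (up a)) b) as [L|L].
    - apply (Htrans a (IZR (up a)) b); try lra; apply Hfree; try lra; intros z Hz.
      + pose proof (Hup a z (proj1 Hz)). lra.
      + assert (IZR (up a) + 1 <= IZR z); [|lra].
        rewrite <- plus_IZR. apply IZR_le. apply Zlt_le_succ, lt_IZR. lra.
    - apply Hfree; [lra|]. intros z Hz. pose proof (Hup a z (proj1 Hz)). lra. }
  assert (Long : forall N a b, a <= b <= a + INR N + 1 -> P a b).
  { induction N as [|N IH]; intros a b Hb; [apply Short; simpl in Hb; lra|].
    rewrite S_INR in Hb. destruct (Rle_dec b (a + 1)); [apply Short; lra|].
    apply (Htrans a (a + 1) b); try lra; [apply Short | apply IH]; lra. }
  intros a b Hab. destruct (INR_unbounded (b - a)) as [N HN]. apply (Long N). lra.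
Qed.

(** * Riemann integrals of piecewise continuous functions *)

Lemma RInt_Rext (f g : R -> R) (a b : R) :
  (forall x, Rmin a b < x < Rmax a b -> f x = g x :> R) -> RInt f a b = RInt g a b.
Proof. exact (RInt_ext f g a b). Qed.

Lemma RInt_Rplus (f g : R -> R) (a b : R) : ex_RInt f a b -> ex_RInt g a b ->
  RInt (fun x => f x + g x) a b = RInt f a b + RInt g a b.
Proof. exact (RInt_plus f g a b). Qed.

Lemma RInt_Rminus (f g : R -> R) (a b : R) : ex_RInt f a b -> ex_RInt g a b ->
  RInt (fun x => f x - g x) a b = RInt f a b - RInt g a b.
Proof. exact (RInt_minus f g a b). Qed.

Lemma RInt_Rscal (f : R -> R) (k a b : R) : ex_RInt f a b ->
  RInt (fun x => k * f x) a b = k * RInt f a b.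
Proof. exact (RInt_scal f a b k). Qed.

Lemma RInt_RChasles (f : R -> R) (a b c : R) : ex_RInt f a b -> ex_RInt f b c ->
  RInt f a b + RInt f b c = RInt f a c.
Proof. exact (RInt_Chasles f a b c). Qed.

Lemma RInt_affine (f : R -> R) (u v a b : R) : ex_RInt f (u * a + v) (u * b + v) ->
  RInt (fun y => u * f (u * y + v)) a b = RInt f (u * a + v) (u * b + v).
Proof. exact (RInt_comp_lin f u v a b). Qed.

Lemma RInt_shift (f : R -> R) (c a b : R) : ex_RInt f (a + c) (b + c) ->
  RInt (fun y => f (y + c)) a b = RInt f (a + c) (b + c).
Proof.
  intros H. replace (a + c) with (1 * a + c) in * by ring.
  replace (b + c) with (1 * b + c) in * by ring.
  rewrite <- RInt_affine by exact H. apply RInt_ext. intros; rewrite !Rmult_1_l; f_equal; ring.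
Qed.

Lemma RInt_eq0 (f : R -> R) (a b : R) :
  (forall x, Rmin a b < x < Rmax a b -> f x = 0) -> RInt f a b = 0.
Proof.
  intros H. rewrite (RInt_ext f (fun _ => 0)) by exact H.
  rewrite RInt_const. simpl. unfold scal; simpl; unfold mult; simpl. ring.
Qed.

Lemma ex_RInt_piecewise_continuous (f : R -> R) (a b : R) :
  piecewise_continuous f -> ex_RInt f a b.
Proof.
  intros H. revert a b.
  assert (K : forall a b, a <= b -> ex_RInt f a b).
  { apply integer_split_ind.
    - intros a b c _ _. apply ex_RInt_Chasles.
    - intros a b Hab Hi. destruct (H a b Hab Hi) as [g [C E]].
      apply (ex_RInt_ext g).
      + intros x Hx. rewrite Rmin_left, Rmax_right in Hx by lra. symmetry. now apply E.
      + apply (ex_RInt_continuous (V := R_CompleteNormedModule) g). intros; apply C.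
    - intros a; apply ex_RInt_point. }
  intros a b. destruct (Rle_dec a b); [now apply K|]. apply ex_RInt_swap, K. lra.
Qed.

Lemma is_derive_RInt_continuous (g : R -> R) (a x : R) :
  (forall y, continuous g y) -> is_derive (fun y => RInt g a y) x (g x).
Proof.
  intros C. apply (is_derive_RInt g (fun y => RInt g a y) a x); [|apply C].
  apply filter_forall. intros y. apply (RInt_correct (V := R_CompleteNormedModule)).
  apply (ex_RInt_continuous (V := R_CompleteNormedModule) g). intros; apply C.
Qed.

Lemma RInt_continuous_antiderivative (F g : R -> R) (a b : R) :
  a < b -> (forall x, continuous g x) -> (forall x, continuous F x) ->
  (forall x, a < x < b -> is_derive F x (g x)) -> RInt g a b = F b - F a.
Proof.
  intros Hab Cg CF D.
  set (H := fun x => RInt g a x - F x).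
  assert (HD : forall x, a < x < b -> derivable_pt_lim H x 0).
  { intros x Hx. apply is_derive_Reals. rewrite <- (Rminus_diag (g x)).
    apply (is_derive_minus (fun y => RInt g a y) F); [apply is_derive_RInt_continuous|]; auto. }
  assert (HC : forall x, a <= x <= b -> continuity_pt H x).
  { intros x _. apply continuity_pt_filterlim. apply continuous_Rminus; [|apply CF].
    apply (ex_derive_continuous (K := R_AbsRing) (V := R_NormedModule) (fun y => RInt g a y)).
    exists (g x). now apply is_derive_RInt_continuous. }
  assert (Hconst : constant_D_eq H (fun x => a <= x <= b) (H a)).
  { apply (null_derivative_loc H a b (fun x Hx => exist _ 0 (HD x Hx)) HC).
    intros x Hx. apply derive_pt_eq_0, HD, Hx. }
  specialize (Hconst b ltac:(lra)). unfold H in Hconst. rewrite RInt_point in Hconst.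
  simpl in Hconst. unfold zero in Hconst; simpl in Hconst. lra.
Qed.

Lemma RInt_piecewise_antiderivative (F f : R -> R) (a b : R) :
  (forall x, continuous F x) -> (forall x, noninteger x -> is_derive F x (f x)) ->
  piecewise_continuous f -> RInt f a b = F b - F a.
Proof.
  intros CF D Pf. revert a b.
  assert (K : forall a b, a <= b -> @eq R (RInt f a b) (F b - F a)).
  { apply integer_split_ind.
    - intros a b c _ _ H1 H2.
      rewrite <- (RInt_RChasles f a b c) by now apply ex_RInt_piecewise_continuous.
      rewrite H1, H2. ring.
    - intros a b Hab Hi. destruct (Pf a b Hab Hi) as [g [C E]].
      rewrite (RInt_ext f g).
      + apply RInt_continuous_antiderivative; auto. intros x Hx. rewrite <- E by exact Hx.
        apply D. exact (integer_free_noninteger a b x Hi Hx).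
      + intros x Hx. rewrite Rmin_left, Rmax_right in Hx by lra. now apply E.
    - intros a. rewrite RInt_point. simpl. unfold zero; simpl. ring. }
  intros a b. destruct (Rle_dec a b); [now apply K|].
  rewrite <- opp_RInt_swap by now apply ex_RInt_piecewise_continuous.
  rewrite K by lra. simpl. unfold opp; simpl. ring.
Qed.

Lemma RInt_ext_noninteger (f g : R -> R) (a b : R) :
  piecewise_continuous f -> piecewise_continuous g ->
  (forall y, noninteger y -> f y = g y) -> RInt f a b = RInt g a b.
Proof.
  intros Pf Pg E. revert a b.
  assert (K : forall a b, a <= b -> RInt f a b = RInt g a b).
  { apply integer_split_ind.
    - intros x y z _ _ H1 H2.
      rewrite <- (RInt_RChasles f x y z), <- (RInt_RChasles g x y z)
        by now apply ex_RInt_piecewise_continuous.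
      now rewrite H1, H2.
    - intros x y Hxy Hi. apply RInt_ext. intros w Hw.
      rewrite Rmin_left, Rmax_right in Hw by lra.
      apply E. exact (integer_free_noninteger x y w Hi Hw).
    - intros x. now rewrite !RInt_point. }
  intros a b. destruct (Rle_dec a b); [now apply K|].
  rewrite <- (opp_RInt_swap f), <- (opp_RInt_swap g)
    by now apply ex_RInt_piecewise_continuous.
  now rewrite K by lra.
Qed.

Lemma RInt_reflect (f g : R -> R) (c : Z) (a b : R) :
  piecewise_continuous f -> piecewise_continuous g ->
  (forall y, noninteger y -> f y = g (IZR c - y)) ->
  RInt f a b = RInt g (IZR c - b) (IZR c - a).
Proof.
  intros Pf Pg E.
  rewrite (RInt_ext_noninteger f (fun y => g (IZR c - y)));
    [|auto | now apply piecewise_continuous_reflect | exact E].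
  assert (Hg := fun u v => ex_RInt_piecewise_continuous g u v Pg).
  rewrite <- (opp_RInt_swap g) by apply Hg.
  replace (IZR c - a) with (-1 * a + IZR c) by ring.
  replace (IZR c - b) with (-1 * b + IZR c) by ring.
  rewrite <- RInt_affine by apply Hg.
  rewrite RInt_Rscal.
  - simpl. unfold opp; simpl.
    rewrite (RInt_ext (fun x => g (-1 * x + IZR c)) (fun y => g (IZR c - y))) by (intros; f_equal; ring).
    lra.
  - apply ex_RInt_piecewise_continuous.
    apply (piecewise_continuous_ext (fun y => g (IZR c - y))); [intros; f_equal; ring|].
    now apply piecewise_continuous_reflect.
Qed.

(** * Backward differences of B-splines *)

Lemma cardB_RInt (b : nat) (t : R) : cardB (S b) t = RInt (cardB b) (t - 1) t.
Proof.
  assert (Ib := fun u v => ex_RInt_piecewise_continuous (cardB b) u v (piecewise_continuous_cardB b)).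
  assert (Pshift : piecewise_continuous (fun x => cardB b (x - 1))).
  { apply (piecewise_continuous_ext (fun x => cardB b (x + IZR (-1)))); [intros; f_equal; simpl; ring|].
    apply piecewise_continuous_shift, piecewise_continuous_cardB. }
  pose proof (RInt_piecewise_antiderivative (cardB (S b)) (fun x => cardB b x - cardB b (x - 1))
     (-1) t (cardB_continuous b) (is_derive_cardB_noninteger b)
     (piecewise_continuous_minus _ _ (piecewise_continuous_cardB b) Pshift)) as F.
  rewrite (cardB_eq0_neg (S b) (-1)) in F by lra.
  rewrite RInt_Rminus in F; [|apply Ib | now apply ex_RInt_piecewise_continuous].
  rewrite (RInt_ext (fun x => cardB b (x - 1)) (fun x => cardB b (x + -1))) in F
    by (intros; f_equal; ring).
  rewrite RInt_shift in F by apply Ib.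
  rewrite <- (RInt_RChasles (cardB b) (-1) (t - 1) t) in F by apply Ib.
  rewrite <- (RInt_RChasles (cardB b) (-1 + -1) (-1) (t + -1)) in F by apply Ib.
  rewrite (RInt_eq0 (cardB b) (-1 + -1) (-1)) in F.
  - replace (t + -1) with (t - 1) in F by ring. lra.
  - intros x Hx. rewrite Rmin_left, Rmax_right in Hx by lra. apply cardB_eq0_neg. lra.
Qed.

Lemma is_derive_cardB (b : nat) (t : R) :
  is_derive (cardB (S (S b))) t (cardB (S b) t - cardB (S b) (t - 1)).
Proof.
  assert (Ib := fun u v => ex_RInt_piecewise_continuous (cardB (S b)) u v (piecewise_continuous_cardB (S b))).
  apply (is_derive_ext_eq (fun y => RInt (cardB (S b)) 0 y - RInt (cardB (S b)) 0 (y + -1))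
    _ t (cardB (S b) t - cardB (S b) (t + -1))).
  - intros y. rewrite cardB_RInt, <- (RInt_RChasles (cardB (S b)) 0 (y - 1) y) by apply Ib.
    replace (y + -1) with (y - 1) by ring. ring.
  - now replace (t + -1) with (t - 1) by ring.
  - apply (is_derive_minus (fun y => RInt (cardB (S b)) 0 y)).
    + apply is_derive_RInt_continuous, cardB_continuous.
    + apply (is_derive_shift (fun y => RInt (cardB (S b)) 0 y)).
      apply is_derive_RInt_continuous, cardB_continuous.
Qed.

Fixpoint bdiff (q r : nat) (t : R) : R :=
  match r with
  | O => cardB q t
  | S r' => bdiff q r' t - bdiff q r' (t - 1)
  end.

Lemma bdiff_eq0_neg (q r : nat) (t : R) : t < 0 -> bdiff q r t = 0.
Proof.
  revert t; induction r as [|r IH]; intros t Ht; simpl.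
  - now apply cardB_eq0_neg.
  - rewrite !IH by lra. ring.
Qed.

Lemma bdiff_eq0_ge (q r : nat) (t : R) : INR (q + r) + 1 <= t -> bdiff q r t = 0.
Proof.
  revert t; induction r as [|r IH]; intros t Ht; simpl.
  - apply cardB_eq0_ge. now rewrite Nat.add_0_r in Ht.
  - rewrite Nat.add_succ_r, S_INR in Ht. rewrite !IH by lra. ring.
Qed.

Lemma bdiff_at0 (q r : nat) : (1 <= q)%nat -> bdiff q r 0 = 0.
Proof.
  intros Hq. induction r as [|r IH]; simpl.
  - now apply cardB_at0.
  - rewrite IH, bdiff_eq0_neg by lra. ring.
Qed.

Lemma piecewise_continuous_bdiff (q r : nat) : piecewise_continuous (bdiff q r).
Proof.
  induction r as [|r IH]; simpl; [apply piecewise_continuous_cardB|].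
  apply piecewise_continuous_minus; [exact IH|].
  apply (piecewise_continuous_ext (fun x => bdiff q r (x + IZR (-1)))); [intros; f_equal; simpl; ring|].
  now apply piecewise_continuous_shift.
Qed.

Lemma is_derive_bdiff (q r : nat) (t : R) :
  is_derive (bdiff (S (S q)) r) t (bdiff (S q) (S r) t).
Proof.
  revert t; induction r as [|r IH]; intros t; [exact (is_derive_cardB q t)|].
  apply (is_derive_ext_eq (fun y => bdiff (S (S q)) r y - bdiff (S (S q)) r (y + -1))
    _ t (bdiff (S q) (S r) t - bdiff (S q) (S r) (t + -1))).
  - intros y. simpl. now replace (y + -1) with (y - 1) by ring.
  - simpl. now replace (t + -1) with (t - 1) by ring.
  - apply (is_derive_minus (bdiff (S (S q)) r)); [apply IH|].
    apply is_derive_shift, IH.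
Qed.

Lemma Derive_n_cardB (m k : nat) (t : R) :
  (k < m)%nat -> Derive_n (cardB m) k t = bdiff (m - k) k t.
Proof.
  revert t; induction k as [|k IH]; intros t Hk; [simpl; now rewrite Nat.sub_0_r|].
  simpl Derive_n. rewrite (Derive_ext _ (bdiff (m - k) k)) by (intros; apply IH; lia).
  destruct (m - k)%nat as [|[|q]] eqn:E; [lia | lia|].
  replace (m - S k)%nat with (S q) by lia.
  apply is_derive_unique, is_derive_bdiff.
Qed.

Lemma cardB_reflect (p : nat) (t : R) :
  (1 <= p)%nat \/ noninteger t -> cardB p (INR p + 1 - t) = cardB p t.
Proof.
  intros Hp. destruct p as [|p].
  - destruct Hp as [Hp | H]; [lia|].
    pose proof (H 0%Z) as H0. pose proof (H 1%Z) as H1. simpl in H0, H1.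
    simpl INR. rewrite !cardB_O.
    destruct (Rle_dec 0 t), (Rle_dec 0 (0 + 1 - t)), (Rlt_dec t 1), (Rlt_dec (0 + 1 - t) 1);
      try reflexivity; lra.
  - clear Hp. revert t; induction p as [|p IH]; intros t.
    + rewrite !cardB_1. simpl INR. replace (1 + 1 - t - 1) with (- (t - 1)) by ring.
      now rewrite Rabs_Ropp.
    + rewrite !(cardB_succ (S p)). rewrite !S_INR in *.
      replace (INR p + 1 + 1 + 1 - t - 1) with (INR p + 1 + 1 - t) by ring.
      replace (INR p + 1 + 1 + 1 - t) with (INR p + 1 + 1 - (t - 1)) by ring.
      rewrite !IH. field. pose proof (pos_INR p). lra.
Qed.

Lemma bdiff_reflect (q r : nat) (t : R) : (1 <= q)%nat \/ noninteger t ->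
  bdiff q r (INR (q + r) + 1 - t) = (-1) ^ r * bdiff q r t.
Proof.
  revert t; induction r as [|r IH]; intros t H; simpl.
  - rewrite Nat.add_0_r, cardB_reflect by exact H. ring.
  - rewrite Nat.add_succ_r, S_INR.
    replace (INR (q + r) + 1 + 1 - t - 1) with (INR (q + r) + 1 - t) by ring.
    replace (INR (q + r) + 1 + 1 - t) with (INR (q + r) + 1 - (t - 1)) by ring.
    rewrite !IH; [ring | exact H |].
    destruct H; [now left | right; now apply noninteger_sub1].
Qed.

(** * The convolution identity *)

Lemma ex_RInt_bdiff_mult (a u b v : nat) (s : Z) (lo hi : R) :
  ex_RInt (fun x => bdiff a u x * bdiff b v (x + IZR s)) lo hi.
Proof.
  apply ex_RInt_piecewise_continuous, piecewise_continuous_mult;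
    [|apply piecewise_continuous_shift]; apply piecewise_continuous_bdiff.
Qed.

Definition bdiff_convolution (a b u v : nat) : Prop :=
  forall (s : Z) (lo hi : R), lo <= 0 -> INR (a + u) + 1 <= hi ->
  RInt (fun x => bdiff a u x * bdiff b v (x + IZR s)) lo hi
  = (-1) ^ u * bdiff (a + b + 1) (u + v) (INR (a + u) + 1 + IZR s) :> R.

Lemma bdiff_convolution_succ_r (a b u v : nat) :
  bdiff_convolution a b u v -> bdiff_convolution a b u (S v).
Proof.
  intros H s lo hi Hlo Hhi.
  rewrite (RInt_ext _ (fun x => bdiff a u x * bdiff b v (x + IZR s)
                                - bdiff a u x * bdiff b v (x + IZR (s - 1)))).
  2: { intros x _. rewrite minus_IZR. simpl.
       replace (x + (IZR s - 1)) with (x + IZR s - 1) by ring. ring. }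
  rewrite RInt_Rminus, (H s), (H (s - 1)%Z) by (auto using ex_RInt_bdiff_mult).
  rewrite (Nat.add_succ_r u v), minus_IZR. cbn [bdiff].
  replace (INR (a + u) + 1 + (IZR s - 1)) with (INR (a + u) + 1 + IZR s - 1) by ring. ring.
Qed.

Lemma bdiff_convolution_succ_l (a b u v : nat) :
  (forall v, bdiff_convolution a b u v) -> bdiff_convolution a b (S u) v.
Proof.
  intros H s lo hi Hlo Hhi.
  set (g := fun y => bdiff a u y * bdiff b v (y + IZR (s + 1))).
  rewrite (RInt_ext _ (fun x => bdiff a u x * bdiff b v (x + IZR s) - g (x + -1))).
  2: { intros x _. unfold g. rewrite plus_IZR. simpl.
       replace (x + -1 + (IZR s + 1)) with (x + IZR s) by ring.
       replace (x + -1) with (x - 1) by ring. ring. }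
  assert (Pg : piecewise_continuous g).
  { apply piecewise_continuous_mult; [|apply piecewise_continuous_shift];
      apply piecewise_continuous_bdiff. }
  rewrite RInt_Rminus; [|apply ex_RInt_bdiff_mult |
    apply ex_RInt_piecewise_continuous, (piecewise_continuous_shift g (-1)), Pg].
  rewrite RInt_shift by apply ex_RInt_bdiff_mult.
  unfold g. rewrite (Nat.add_succ_r a u), S_INR in Hhi.
  rewrite (H v s), (H v (s + 1)%Z) by lra.
  rewrite plus_IZR, (Nat.add_succ_r a u), S_INR. change (S u + v)%nat with (S (u + v)).
  cbn [bdiff pow].
  replace (INR (a + u) + 1 + 1 + IZR s - 1) with (INR (a + u) + 1 + IZR s) by ring.
  replace (INR (a + u) + 1 + (IZR s + 1)) with (INR (a + u) + 1 + 1 + IZR s) by ring.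
  ring.
Qed.

Lemma bdiff_convolution_all (a : nat) :
  (forall b, bdiff_convolution a b 0 0) -> forall b u v, bdiff_convolution a b u v.
Proof.
  intros H0 b u. induction u as [|u IH]; intros v.
  - induction v as [|v IHv]; [apply H0 | now apply bdiff_convolution_succ_r].
  - now apply bdiff_convolution_succ_l.
Qed.

Lemma bdiff_convolution_O (b : nat) : bdiff_convolution 0 b 0 0.
Proof.
  intros s lo hi Hlo Hhi. cbn [bdiff pow Nat.add] in *. simpl INR in *.
  rewrite Nat.add_1_r, cardB_RInt.
  assert (Hex := ex_RInt_bdiff_mult 0 0 b 0 s).
  rewrite <- (RInt_RChasles _ lo 0 hi), <- (RInt_RChasles _ 0 1 hi) by apply Hex.
  rewrite (RInt_eq0 _ lo 0), (RInt_eq0 _ 1 hi).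
  - rewrite (RInt_ext _ (fun x => cardB b (x + IZR s))).
    + rewrite RInt_shift by now apply ex_RInt_piecewise_continuous, piecewise_continuous_cardB.
      replace (0 + 1 + IZR s - 1) with (0 + IZR s) by ring.
      replace (1 + IZR s) with (0 + 1 + IZR s) by ring. lra.
    + intros x Hx. rewrite Rmin_left, Rmax_right in Hx by lra. rewrite cardB_O.
      destruct (Rle_dec 0 x); [|lra]. destruct (Rlt_dec x 1); lra.
  - intros x Hx. rewrite Rmin_left, Rmax_right in Hx by lra.
    rewrite (cardB_eq0_ge 0) by (simpl; lra). lra.
  - intros x Hx. rewrite Rmin_left, Rmax_right in Hx by lra. rewrite cardB_eq0_neg by lra. lra.
Qed.

Lemma eq_of_diff_eq_eventually (L M : Z -> R) (c : R) :
  (forall s, L s - L (s + 1)%Z = M s - M (s + 1)%Z) ->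
  (forall s, c <= IZR s -> L s = M s) -> forall s, L s = M s.
Proof.
  intros Hdiff Hlarge s.
  assert (Per : forall K : nat, L s - M s = L (s + Z.of_nat K)%Z - M (s + Z.of_nat K)%Z).
  { induction K as [|K IH]; [now rewrite Z.add_0_r|].
    rewrite IH, Nat2Z.inj_succ, <- Z.add_1_r, Z.add_assoc.
    specialize (Hdiff (s + Z.of_nat K)%Z). lra. }
  destruct (INR_unbounded (c - IZR s)) as [K HK].
  specialize (Per K). rewrite (Hlarge (s + Z.of_nat K)%Z) in Per; [lra|].
  rewrite plus_IZR, <- INR_IZR_INZ. lra.
Qed.

Lemma RInt_cardB_product_rule (a b : nat) (s : Z) (lo hi : R) :
  lo <= 0 -> INR a + 2 <= hi ->
  RInt (fun x => bdiff a 1 x * cardB (S b) (x + IZR s)) lo hi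
  + RInt (fun x => cardB (S a) x * cardB b (x + IZR s)) lo hi
  - RInt (fun x => cardB (S a) x * cardB b (x + IZR (s - 1))) lo hi = 0.
Proof.
  intros Hlo Hhi.
  assert (Pprod : forall (g : R -> R) d (z : Z), piecewise_continuous g ->
            piecewise_continuous (fun x => g x * cardB d (x + IZR z))).
  { intros g d z Hg. apply piecewise_continuous_mult; [exact Hg|].
    apply piecewise_continuous_shift, piecewise_continuous_cardB. }
  assert (Pa : piecewise_continuous (bdiff a 1)) by apply piecewise_continuous_bdiff.
  assert (PSa : piecewise_continuous (cardB (S a))) by apply piecewise_continuous_cardB.
  rewrite <- RInt_Rplus, <- RInt_Rminus by
    (apply ex_RInt_piecewise_continuous; try apply piecewise_continuous_plus; apply Pprod; assumption).
  rewrite (RInt_piecewise_antiderivative (fun x => cardB (S a) x * cardB (S b) (x + IZR s))).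
  - rewrite (cardB_eq0_ge (S a) hi) by (rewrite S_INR; lra).
    destruct (Rlt_dec lo 0); [rewrite (cardB_eq0_neg (S a) lo) by lra |
      replace lo with 0 by lra; rewrite cardB_at0 by lia]; ring.
  - intros x. apply continuous_Rmult; [|apply continuous_shift]; apply cardB_continuous.
  - intros x Hx. eapply is_derive_ext_eq; [intros; reflexivity | |].
    2: { apply is_derive_Rmult; [now apply is_derive_cardB_noninteger|].
         apply is_derive_shift, is_derive_cardB_noninteger. now apply noninteger_add_IZR. }
    cbn [bdiff]. rewrite minus_IZR.
    replace (x + (IZR s - 1)) with (x + IZR s - 1) by ring. ring.
  - apply piecewise_continuous_minus; [apply piecewise_continuous_plus|]; apply Pprod; assumption.
Qed.

Lemma cardB_convolution_diff (a b : nat) (s : Z) (lo hi : R) :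
  bdiff_convolution a (S b) 1 0 -> lo <= 0 -> INR a + 2 <= hi ->
  RInt (fun x => cardB (S a) x * cardB b (x + IZR s)) lo hi
  - RInt (fun x => cardB (S a) x * cardB b (x + IZR (s + 1))) lo hi
  = cardB (a + b + 2) (INR a + 2 + IZR s) - cardB (a + b + 2) (INR a + 2 + IZR (s + 1)) :> R.
Proof.
  intros Hconv Hlo Hhi.
  pose proof (RInt_cardB_product_rule a b (s + 1) lo hi Hlo Hhi) as Hparts.
  rewrite Z.add_simpl_r in Hparts.
  change (cardB (S b)) with (bdiff (S b) 0) in Hparts.
  rewrite (Hconv (s + 1)%Z lo hi Hlo) in Hparts by (rewrite Nat.add_1_r, S_INR; lra).
  replace (a + S b + 1)%nat with (a + b + 2)%nat in Hparts by lia.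
  replace (a + 1)%nat with (S a) in Hparts by lia.
  change (1 + 0)%nat with 1%nat in Hparts. cbn [bdiff pow] in Hparts.
  rewrite S_INR, plus_IZR in Hparts. rewrite plus_IZR.
  replace (INR a + 1 + 1 + (IZR s + 1) - 1) with (INR a + 2 + IZR s) in Hparts by ring.
  replace (INR a + 1 + 1 + (IZR s + 1)) with (INR a + 2 + (IZR s + 1)) in Hparts by ring.
  lra.
Qed.

Lemma bdiff_convolution_succ (a : nat) :
  (forall b, bdiff_convolution a b 0 0) -> forall b, bdiff_convolution (S a) b 0 0.
Proof.
  intros H0 b s lo hi Hlo Hhi.
  rewrite Nat.add_0_r, S_INR in Hhi.
  change (bdiff (S a) 0) with (cardB (S a)). change (bdiff b 0) with (cardB b).
  replace (S a + b + 1)%nat with (a + b + 2)%nat by lia.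
  change (bdiff (a + b + 2) (0 + 0)) with (cardB (a + b + 2)).
  rewrite Nat.add_0_r, S_INR, pow_O, Rmult_1_l.
  replace (INR a + 1 + 1) with (INR a + 2) by ring.
  revert s. apply (eq_of_diff_eq_eventually _ _ (INR b + 1)).
  - intros s. apply cardB_convolution_diff; [|exact Hlo | lra].
    now apply bdiff_convolution_all.
  - intros s Hs. rewrite RInt_eq0.
    + rewrite cardB_eq0_ge; [reflexivity|]. rewrite !plus_INR. simpl. pose proof (pos_INR a). lra.
    + intros x _. destruct (Rle_dec x 0) as [Hx|Hx].
      * destruct (Req_dec x 0) as [->|Hx0]; [rewrite cardB_at0 by lia | rewrite cardB_eq0_neg by lra]; lra.
      * rewrite (cardB_eq0_ge b) by lra. lra.
Qed.

Theorem bdiff_convolution_holds (a b u v : nat) : bdiff_convolution a b u v.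
Proof.
  revert b u v. apply bdiff_convolution_all.
  induction a as [|a IH]; [apply bdiff_convolution_O | now apply bdiff_convolution_succ].
Qed.

(** * Derivatives of the Neumann basis functions *)

(** Coquelicot's [Derive f t] is the limit of [(f (t + h) - f t) / h] along [h = 1 / (k + 1)],
    so it only sees [f] to the right of [t]; this computes the derivatives of order [p]
    of degree-[p] splines, which are merely piecewise constant. *)
Definition right_linear (F : R -> R) (t slope : R) : Prop :=
  exists d, 0 < d /\ forall h, 0 < h < d -> F (t + h) = F t + h * slope.

Lemma Derive_right_linear (F : R -> R) (t slope : R) :
  right_linear F t slope -> Derive F t = slope.
Proof.
  intros [d [Hd H]]. unfold Derive, Lim. simpl.
  rewrite (Lim_seq_ext_loc _ (fun _ => slope)); [now rewrite Lim_seq_const|].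
  destruct (INR_unbounded (/ d)) as [N HN]. exists N. intros k Hk.
  pose proof (pos_INR k).
  assert (Hpos : 0 < / (INR k + 1)) by (apply Rinv_0_lt_compat; lra).
  assert (Hsmall : / (INR k + 1) < d).
  { apply le_INR in Hk. rewrite <- (Rinv_inv d). apply Rinv_lt_contravar; [|lra].
    apply Rmult_lt_0_compat; [apply Rinv_0_lt_compat|]; lra. }
  rewrite H by lra. field. lra.
Qed.

Lemma right_linear_op (op : R -> R -> R) (F G : R -> R) (t S T : R) :
  (forall x y h u v, op (x + h * u) (y + h * v) = op x y + h * op u v) ->
  right_linear F t S -> right_linear G t T -> right_linear (fun y => op (F y) (G y)) t (op S T).
Proof.
  intros Hop [d1 [P1 H1]] [d2 [P2 H2]]. exists (Rmin d1 d2). split; [now apply Rmin_glb_lt|].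
  intros h Hh. pose proof (Rmin_l d1 d2). pose proof (Rmin_r d1 d2).
  rewrite H1, H2 by lra. apply Hop.
Qed.

Lemma right_linear_plus (F G : R -> R) (t S T : R) :
  right_linear F t S -> right_linear G t T -> right_linear (fun y => F y + G y) t (S + T).
Proof. apply (right_linear_op Rplus). intros; ring. Qed.

Lemma right_linear_minus (F G : R -> R) (t S T : R) :
  right_linear F t S -> right_linear G t T -> right_linear (fun y => F y - G y) t (S - T).
Proof. apply (right_linear_op Rminus). intros; ring. Qed.

Lemma right_linear_scal (F : R -> R) (t S k : R) :
  right_linear F t S -> right_linear (fun y => k * F y) t (k * S).
Proof. intros [d [P H]]. exists d. split; [exact P|]. intros h Hh. rewrite H by exact Hh. ring. Qed.

Lemma right_linear_affine (F : R -> R) (x a b S : R) :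
  0 < a -> right_linear F (a * x + b) S -> right_linear (fun y => F (a * y + b)) x (a * S).
Proof.
  intros Ha [d [P H]]. exists (d / a). split; [now apply Rdiv_lt_0_compat|].
  intros h [Hh1 Hh2]. replace (a * (x + h) + b) with (a * x + b + a * h) by ring.
  rewrite H; [ring|]. split; [now apply Rmult_lt_0_compat|].
  apply (Rmult_lt_compat_l a) in Hh2; [|exact Ha].
  now replace (a * (d / a)) with d in Hh2 by (field; lra).
Qed.

Lemma right_linear_cardB_1 (t : R) : right_linear (cardB 1) t (cardB 0 t - cardB 0 (t - 1)).
Proof.
  assert (Hd : exists d, 0 < d /\ (t < 0 -> t + d <= 0) /\ (0 <= t < 1 -> t + d <= 1)
                        /\ (1 <= t < 2 -> t + d <= 2)).
  { destruct (Rlt_dec t 0); [exists (-t) | destruct (Rlt_dec t 1); [exists (1 - t) |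
      destruct (Rlt_dec t 2); [exists (2 - t) | exists 1]]]; repeat split; intros; lra. }
  destruct Hd as [d [Hd [H0 [H1 H2]]]]. exists d. split; [exact Hd|]. intros h Hh.
  rewrite !cardB_1, !cardB_O.
  destruct (Rle_dec 0 t), (Rlt_dec t 1), (Rle_dec 0 (t - 1)), (Rlt_dec (t - 1) 1);
    unfold Rabs; repeat destruct Rcase_abs; lra.
Qed.

Lemma right_linear_bdiff_1 (r : nat) (t : R) : right_linear (bdiff 1 r) t (bdiff 0 (S r) t).
Proof.
  revert t; induction r as [|r IH]; intros t; [exact (right_linear_cardB_1 t)|].
  change (bdiff 0 (S (S r)) t) with (bdiff 0 (S r) t - bdiff 0 (S r) (t - 1)).
  apply right_linear_minus; [apply IH|].
  destruct (IH (t - 1)) as [d [P H]]. exists d. split; [exact P|]. intros h Hh.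
  replace (t + h - 1) with (t - 1 + h) by ring. now apply H.
Qed.

Definition cardB_affine3 (p : nat) (c b1 b2 b3 : R) (y : R) : R :=
  cardB p (c * y + b1) + cardB p (c * y + b2) + cardB p (c * y + b3).

Lemma Derive_n_cardB_affine3 (p k : nat) (c b1 b2 b3 x : R) :
  0 < c -> (k <= p)%nat ->
  Derive_n (cardB_affine3 p c b1 b2 b3) k x
  = c ^ k * (bdiff (p - k) k (c * x + b1) + bdiff (p - k) k (c * x + b2)
             + bdiff (p - k) k (c * x + b3)).
Proof.
  intros Hc. revert x; induction k as [|k IH]; intros x Hk.
  - simpl. rewrite Nat.sub_0_r. unfold cardB_affine3. ring.
  - simpl Derive_n.
    rewrite (Derive_ext _ (fun y => c ^ k * (bdiff (p - k) k (c * y + b1)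
               + bdiff (p - k) k (c * y + b2) + bdiff (p - k) k (c * y + b3))))
      by (intros; apply IH; lia).
    transitivity (c ^ k * (c * bdiff (p - S k) (S k) (c * x + b1)
        + c * bdiff (p - S k) (S k) (c * x + b2) + c * bdiff (p - S k) (S k) (c * x + b3)));
      [|simpl; ring].
    destruct (p - k)%nat as [|[|q]] eqn:E; [lia | |].
    + replace (p - S k)%nat with 0%nat by lia.
      apply Derive_right_linear, right_linear_scal.
      apply right_linear_plus; [apply right_linear_plus|];
        apply (right_linear_affine (bdiff 1 k)); auto using right_linear_bdiff_1.
    + replace (p - S k)%nat with (S q) by lia. apply is_derive_unique, is_derive_scal.
      apply is_derive_Rplus; [apply is_derive_Rplus|];
        apply (is_derive_affine (bdiff (S (S q)) k)), is_derive_bdiff.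
Qed.

Lemma Series_eventually0 (u : nat -> R) :
  (forall k, (2 <= k)%nat -> u k = 0) -> Series u = u 0%nat + u 1%nat.
Proof.
  intros H. unfold Series.
  rewrite (Lim_seq_ext_loc _ (fun _ => u 0%nat + u 1%nat)); [now rewrite Lim_seq_const|].
  exists 1%nat. intros N HN. induction N as [|N IH]; [lia|].
  destruct N as [|N]; [now rewrite sum_Sn, sum_O|].
  rewrite sum_Sn, IH, (H (S (S N))) by lia. simpl. unfold plus; simpl. ring.
Qed.

Section NeumannBasis.
Variables (p n i : nat).
Hypothesis Hi : (1 <= i <= n)%nat.
Hypothesis Hn : (p + 1 <= n)%nat.

Let a := INR i - 1 / 2.

Lemma Cc_eq0 (c x : R) :
  INR n * x - c + (INR p + 1) / 2 < 0 \/ INR p + 1 <= INR n * x - c + (INR p + 1) / 2 ->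
  Cc p n c x = 0.
Proof. intros [H|H]; unfold Cc; [apply cardB_eq0_neg | apply cardB_eq0_ge]; exact H. Qed.

Lemma NeuB_near_unit (x : R) : -1 / 2 < INR n * x < INR n + 1 / 2 ->
  NeuB p n i x = cardB_affine3 p (INR n) (- a + (INR p + 1) / 2) (a + (INR p + 1) / 2)
                   (a - 2 * INR n + (INR p + 1) / 2) x.
Proof.
  intros Hx. pose proof (pos_INR p).
  assert (Ha : 1 / 2 <= a <= INR n - 1 / 2 /\ INR p + 1 <= INR n).
  { unfold a. destruct Hi as [H1 H2]. apply le_INR in H1, H2. apply le_INR in Hn.
    rewrite plus_INR in Hn. simpl in *. lra. }
  unfold NeuB, sumZ. fold a.
  rewrite Series_eventually0.
  2: { intros k Hk. apply le_INR in Hk. rewrite <- INR_IZR_INZ. simpl in Hk.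
       rewrite !Cc_eq0 by (left; nra). ring. }
  rewrite (Series_eventually0 (fun k => _)).
  2: { intros k Hk. apply le_INR in Hk. rewrite minus_IZR, opp_IZR, <- INR_IZR_INZ. simpl in Hk.
       rewrite !Cc_eq0 by (right; nra). ring. }
  simpl Z.of_nat. simpl IZR.
  rewrite (Cc_eq0 (a + 2 * 1 * INR n)), (Cc_eq0 (a + 2 * -1 * INR n)),
    (Cc_eq0 (- a + 2 * -1 * INR n)), (Cc_eq0 (a + 2 * -2 * INR n)),
    (Cc_eq0 (- a + 2 * -2 * INR n)) by (first [left; nra | right; nra]).
  unfold cardB_affine3, Cc.
  replace (INR n * x - (a + 2 * 0 * INR n) + (INR p + 1) / 2)
    with (INR n * x + (- a + (INR p + 1) / 2)) by ring.
  replace (INR n * x - (- a + 2 * 0 * INR n) + (INR p + 1) / 2)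
    with (INR n * x + (a + (INR p + 1) / 2)) by ring.
  replace (INR n * x - (- a + 2 * 1 * INR n) + (INR p + 1) / 2)
    with (INR n * x + (a - 2 * INR n + (INR p + 1) / 2)) by ring.
  ring.
Qed.

Definition bdiff_shift (q r : nat) (s y : R) : R := bdiff q r (y - s).

Lemma Derive_n_NeuB (r : nat) (x : R) : (r <= p)%nat -> 0 <= x <= 1 ->
  Derive_n (NeuB p n i) r x
  = INR n ^ r * (bdiff_shift (p - r) r (INR i - 1) (INR n * x + INR p / 2)
                 + bdiff_shift (p - r) r (- INR i) (INR n * x + INR p / 2)
                 + bdiff_shift (p - r) r (2 * INR n - INR i) (INR n * x + INR p / 2)).
Proof.
  intros Hr Hx.
  assert (Hn0 : 0 < INR n) by (apply lt_0_INR; lia).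
  rewrite (Derive_n_ext_loc _ (cardB_affine3 p (INR n) (- a + (INR p + 1) / 2)
             (a + (INR p + 1) / 2) (a - 2 * INR n + (INR p + 1) / 2))).
  - rewrite Derive_n_cardB_affine3 by (auto; lra). unfold bdiff_shift, a.
    do 2 f_equal; [f_equal|]; f_equal; field.
  - apply (locally_Rabs x (/ (2 * INR n))); [apply Rinv_0_lt_compat; lra|].
    intros y Hy. apply NeuB_near_unit. apply Rabs_def2 in Hy.
    assert (Hny : Rabs (INR n * (y - x)) < 1 / 2).
    { rewrite Rabs_mult, Rabs_pos_eq by lra.
      apply (Rmult_lt_reg_l (/ INR n)); [now apply Rinv_0_lt_compat|].
      rewrite <- Rmult_assoc, Rinv_l, Rmult_1_l by lra.
      replace (/ INR n * (1 / 2)) with (/ (2 * INR n)) by (field; lra).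
      apply Rabs_def1; lra. }
    apply Rabs_def2 in Hny. nra.
Qed.

End NeumannBasis.

(** * Folding the integral by reflections *)

Section Folding.
Variables q r : nat.

Definition bdiff_autocorr (z : R) : R :=
  (-1) ^ r * bdiff (q + q + 1) (r + r) (INR (q + r) + 1 + z).

Lemma RInt_bdiff_autocorr (z : Z) (lo hi : R) : lo <= hi ->
  (lo <= 0 \/ lo <= - IZR z) -> (INR (q + r) + 1 <= hi \/ INR (q + r) + 1 - IZR z <= hi) ->
  RInt (fun x => bdiff q r x * bdiff q r (x + IZR z)) lo hi = bdiff_autocorr (IZR z).
Proof.
  intros Hlh Hlo Hhi.
  set (h := fun x => bdiff q r x * bdiff q r (x + IZR z)).
  assert (Hex := ex_RInt_bdiff_mult q r q r z).
  pose proof (Rmin_l lo 0). pose proof (Rmax_l hi (INR (q + r) + 1)).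
  unfold bdiff_autocorr.
  rewrite <- (bdiff_convolution_holds q q r r z (Rmin lo 0) (Rmax hi (INR (q + r) + 1)))
    by (apply Rmin_r || apply Rmax_r).
  fold h.
  rewrite <- (RInt_RChasles h (Rmin lo 0) lo),
    <- (RInt_RChasles h lo hi (Rmax hi (INR (q + r) + 1))) by apply Hex.
  rewrite (RInt_eq0 h (Rmin lo 0) lo), (RInt_eq0 h hi (Rmax hi (INR (q + r) + 1))); [lra | |].
  - intros x Hx. rewrite Rmin_left, Rmax_right in Hx by lra. unfold h.
    destruct Hhi as [Hh|Hh].
    + rewrite Rmax_left in Hx by lra. lra.
    + rewrite (bdiff_eq0_ge q r (x + IZR z)) by lra. ring.
  - intros x Hx. rewrite Rmin_left, Rmax_right in Hx by lra. unfold h.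
    destruct Hlo as [Hl|Hl].
    + rewrite Rmin_left in Hx by lra. lra.
    + rewrite (bdiff_eq0_neg q r (x + IZR z)) by lra. ring.
Qed.

Let f (s : Z) : R -> R := bdiff_shift q r (IZR s).

Lemma piecewise_continuous_bdiff_shift (s : Z) : piecewise_continuous (f s).
Proof.
  apply (piecewise_continuous_ext (fun y => bdiff q r (y + IZR (- s)))).
  - intros y. unfold f, bdiff_shift. now rewrite opp_IZR.
  - apply piecewise_continuous_shift, piecewise_continuous_bdiff.
Qed.

Lemma piecewise_continuous_bdiff_shift_mult (s t : Z) :
  piecewise_continuous (fun y => f s y * f t y).
Proof. apply piecewise_continuous_mult; apply piecewise_continuous_bdiff_shift. Qed.

Lemma ex_RInt_bdiff_shift_mult (s t : Z) (a b : R) : ex_RInt (fun y => f s y * f t y) a b.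
Proof. apply ex_RInt_piecewise_continuous, piecewise_continuous_bdiff_shift_mult. Qed.

Lemma RInt_bdiff_shift_mult (s t : Z) (a b : R) : a <= b ->
  (a <= IZR s \/ a <= IZR t) -> (IZR s + INR (q + r) + 1 <= b \/ IZR t + INR (q + r) + 1 <= b) ->
  RInt (fun y => f s y * f t y) a b = bdiff_autocorr (IZR s - IZR t).
Proof.
  intros Hab H1 H2.
  rewrite (RInt_ext _ (fun y => (fun x => bdiff q r x * bdiff q r (x + IZR (s - t))) (y + - IZR s))).
  2: { intros y _. unfold f, bdiff_shift. rewrite minus_IZR. f_equal; f_equal; ring. }
  rewrite (RInt_shift (fun x => bdiff q r x * bdiff q r (x + IZR (s - t)))) by apply ex_RInt_bdiff_mult.
  rewrite RInt_bdiff_autocorr, minus_IZR; [reflexivity | lra | |]; rewrite minus_IZR; lra.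
Qed.

Lemma bdiff_shift_mult_eq0 (s t : Z) (y : R) :
  IZR s + INR (q + r) + 1 <= IZR t -> f s y * f t y = 0.
Proof.
  intros Hst. unfold f, bdiff_shift. destruct (Rle_dec (IZR s + INR (q + r) + 1) y).
  - rewrite (bdiff_eq0_ge q r (y - IZR s)) by lra. ring.
  - rewrite (bdiff_eq0_neg q r (y - IZR t)) by lra. ring.
Qed.

Lemma bdiff_shift_reflect (c s : Z) (y : R) : noninteger y ->
  bdiff_shift q r (IZR c - INR (q + r) - 1 - IZR s) y = (-1) ^ r * f s (IZR c - y).
Proof.
  intros Hy. unfold f, bdiff_shift. rewrite <- (bdiff_reflect q r (IZR c - y - IZR s)).
  - f_equal. ring.
  - right. replace (IZR c - y - IZR s) with (IZR (c - s) - y) by (rewrite minus_IZR; ring).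
    now apply noninteger_IZR_sub.
Qed.

Lemma RInt_reflect_both (c s t s' t' : Z) (a b : R) :
  IZR s' = IZR c - INR (q + r) - 1 - IZR s -> IZR t' = IZR c - INR (q + r) - 1 - IZR t ->
  RInt (fun y => f s' y * f t' y) a b = RInt (fun y => f s y * f t y) (IZR c - b) (IZR c - a).
Proof.
  intros E1 E2. apply RInt_reflect; try apply piecewise_continuous_bdiff_shift_mult.
  intros y Hy. unfold f at 1 2. rewrite E1, E2, !bdiff_shift_reflect by exact Hy.
  transitivity ((-1) ^ r * (-1) ^ r * (f s (IZR c - y) * f t (IZR c - y))); [ring|].
  rewrite <- Rpow_mult_distr. replace (-1 * -1) with 1 by ring. rewrite pow1. ring.
Qed.

Lemma RInt_reflect_left (c s t s' t' : Z) (a b : R) :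
  IZR s' = IZR c - INR (q + r) - 1 - IZR s -> IZR t' = IZR c - INR (q + r) - 1 - IZR t ->
  RInt (fun y => f s' y * f t y) a b = RInt (fun y => f s y * f t' y) (IZR c - b) (IZR c - a).
Proof.
  intros E1 E2. apply RInt_reflect; try apply piecewise_continuous_bdiff_shift_mult.
  intros y Hy. unfold f at 1 4. rewrite E1, E2, !bdiff_shift_reflect
    by (exact Hy || now apply noninteger_IZR_sub).
  replace (IZR c - (IZR c - y)) with y by ring. ring.
Qed.

End Folding.

(** * The stiffness matrix *)

Definition neumann_images (q r n k : nat) (y : R) : R :=
  bdiff_shift q r (IZR (Z.of_nat k - 1)) y + bdiff_shift q r (IZR (- Z.of_nat k)) y
  + bdiff_shift q r (IZR (2 * Z.of_nat n - Z.of_nat k)) y.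

Lemma IZR_of_nat (m : nat) : IZR (Z.of_nat m) = INR m.
Proof. now rewrite INR_IZR_INZ. Qed.

Section Stiffness.
Variables p n r i j : nat.
Hypothesis Hn : (p + 1 <= n)%nat.
Hypothesis Hr : (r <= p)%nat.
Hypothesis Hi : (1 <= i <= n)%nat.
Hypothesis Hj : (1 <= j <= n)%nat.

Let q := (p - r)%nat.
Let A := INR p / 2.
Let B := INR n + INR p / 2.

Lemma piecewise_continuous_neumann_images_mult :
  piecewise_continuous (fun y => neumann_images q r n i y * neumann_images q r n j y).
Proof.
  unfold neumann_images.
  apply piecewise_continuous_mult; repeat apply piecewise_continuous_plus;
    apply piecewise_continuous_bdiff_shift.
Qed.

Lemma Xmat_eq_RInt : Xmat p r n i j
  = INR n ^ r * INR n ^ r * / INR n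
    * RInt (fun y => neumann_images q r n i y * neumann_images q r n j y) A B.
Proof.
  assert (Hn0 : 0 < INR n) by (apply lt_0_INR; lia).
  assert (Hoffsets : forall k y, (1 <= k <= n)%nat ->
            bdiff_shift q r (INR k - 1) y + bdiff_shift q r (- INR k) y
            + bdiff_shift q r (2 * INR n - INR k) y = neumann_images q r n k y).
  { intros k y _. unfold neumann_images.
    now rewrite minus_IZR, opp_IZR, minus_IZR, mult_IZR, !IZR_of_nat. }
  set (g := fun y => neumann_images q r n i y * neumann_images q r n j y).
  assert (Hg : forall u v, ex_RInt g u v)
    by (intros; apply ex_RInt_piecewise_continuous, piecewise_continuous_neumann_images_mult).
  unfold Xmat.
  rewrite (RInt_Rext _ (fun x => INR n ^ r * INR n ^ r * / INR n * (INR n * g (INR n * x + A)))).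
  - rewrite RInt_Rscal by (apply (ex_RInt_comp_lin g), Hg).
    rewrite (RInt_affine g (INR n) A 0 1 (Hg _ _)).
    replace (INR n * 0 + A) with A by ring.
    now replace (INR n * 1 + A) with B by (unfold A, B; ring).
  - intros x Hx. rewrite Rmin_left, Rmax_right in Hx by lra.
    rewrite (Derive_n_NeuB p n i), (Derive_n_NeuB p n j) by (auto; lra).
    fold q A. rewrite !Hoffsets by assumption. unfold g. field. lra.
Qed.

Let di := (Z.of_nat i - 1)%Z.
Let li := (- Z.of_nat i)%Z.
Let ri := (2 * Z.of_nat n - Z.of_nat i)%Z.
Let dj := (Z.of_nat j - 1)%Z.
Let lj := (- Z.of_nat j)%Z.
Let rj := (2 * Z.of_nat n - Z.of_nat j)%Z.

Let J (s t : Z) (a b : R) : R :=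
  RInt (fun y => bdiff_shift q r (IZR s) y * bdiff_shift q r (IZR t) y) a b.

Lemma RInt_neumann_images_expand :
  RInt (fun y => neumann_images q r n i y * neumann_images q r n j y) A B
  = J di dj A B + J di lj A B + J di rj A B + J li dj A B + J li lj A B + J li rj A B
    + J ri dj A B + J ri lj A B + J ri rj A B.
Proof.
  set (P := fun s t y => bdiff_shift q r (IZR s) y * bdiff_shift q r (IZR t) y).
  rewrite (RInt_Rext _ (fun y => P di dj y + P di lj y + P di rj y + P li dj y + P li lj y
    + P li rj y + P ri dj y + P ri lj y + P ri rj y))
    by (intros; unfold P, neumann_images, di, li, ri, dj, lj, rj; ring).
  unfold P, J. rewrite !RInt_Rplus; try reflexivity;
    apply ex_RInt_piecewise_continuous; repeat apply piecewise_continuous_plus;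
    apply piecewise_continuous_bdiff_shift_mult.
Qed.

Lemma neumann_offsets :
  IZR di = INR i - 1 /\ IZR li = - INR i /\ IZR ri = 2 * INR n - INR i /\
  IZR dj = INR j - 1 /\ IZR lj = - INR j /\ IZR rj = 2 * INR n - INR j.
Proof.
  unfold di, li, ri, dj, lj, rj. now rewrite !minus_IZR, !opp_IZR, !mult_IZR, !IZR_of_nat.
Qed.

(** Reflection about [p] exchanges the images [d] and [l] of a basis function, reflection
    about [2n + p] exchanges [d] and [r], and the images [l] and [r] have disjoint supports. *)
Lemma RInt_neumann_images_reflect :
  RInt (fun y => neumann_images q r n i y * neumann_images q r n j y) A B
  = J di dj (A - INR n) A + J di dj A B + J di dj B (B + INR n)
    + J di lj (A - INR n) A + J di lj A B + J di rj A B + J di rj B (B + INR n).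
Proof.
  assert (Hqr : (q + r)%nat = p) by (unfold q; lia).
  assert (Hpn : INR p + 1 <= INR n) by (rewrite <- S_INR; apply le_INR; lia).
  assert (Hi' : 1 <= INR i <= INR n) by (split; [change 1 with (INR 1)|]; apply le_INR; lia).
  assert (Hj' : 1 <= INR j <= INR n) by (split; [change 1 with (INR 1)|]; apply le_INR; lia).
  destruct neumann_offsets as [Edi [Eli [Eri [Edj [Elj Erj]]]]].
  set (cl := Z.of_nat p). set (cr := (2 * Z.of_nat n + Z.of_nat p)%Z).
  assert (Hcl : forall s : Z, IZR cl - INR (q + r) - 1 - IZR s = - IZR s - 1)
    by (intros; unfold cl; rewrite Hqr, IZR_of_nat; ring).
  assert (Hcr : forall s : Z, IZR cr - INR (q + r) - 1 - IZR s = 2 * INR n - IZR s - 1)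
    by (intros; unfold cr; rewrite Hqr, plus_IZR, mult_IZR, !IZR_of_nat; ring).
  rewrite RInt_neumann_images_expand. unfold J.
  rewrite (RInt_reflect_both q r cl di dj li lj), (RInt_reflect_both q r cr di dj ri rj),
    (RInt_reflect_left q r cl di dj li lj), (RInt_reflect_left q r cr di dj ri rj)
    by (rewrite ?Hcl, ?Hcr; lra).
  replace (IZR cl - B) with (A - INR n) by (unfold cl, A, B; rewrite IZR_of_nat; lra).
  replace (IZR cl - A) with A by (unfold cl, A; rewrite IZR_of_nat; lra).
  replace (IZR cr - B) with B
    by (unfold cr, A, B; rewrite plus_IZR, mult_IZR, !IZR_of_nat; lra).
  replace (IZR cr - A) with (B + INR n)
    by (unfold cr, A, B; rewrite plus_IZR, mult_IZR, !IZR_of_nat; lra).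
  rewrite (RInt_eq0 (fun y => bdiff_shift q r (IZR li) y * bdiff_shift q r (IZR rj) y)),
    (RInt_eq0 (fun y => bdiff_shift q r (IZR ri) y * bdiff_shift q r (IZR lj) y)).
  - lra.
  - intros y _. rewrite Rmult_comm. apply bdiff_shift_mult_eq0. rewrite Hqr. lra.
  - intros y _. apply bdiff_shift_mult_eq0. rewrite Hqr. lra.
Qed.

Lemma RInt_neumann_images_fold :
  RInt (fun y => neumann_images q r n i y * neumann_images q r n j y) A B
  = bdiff_autocorr q r (INR i - INR j) + bdiff_autocorr q r (INR i + INR j - 1)
    + bdiff_autocorr q r (INR i + INR j - 1 - 2 * INR n).
Proof.
  assert (Hqr : (q + r)%nat = p) by (unfold q; lia).
  assert (Hpn : INR p + 1 <= INR n) by (rewrite <- S_INR; apply le_INR; lia).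
  assert (Hi' : 1 <= INR i <= INR n) by (split; [change 1 with (INR 1)|]; apply le_INR; lia).
  assert (Hj' : 1 <= INR j <= INR n) by (split; [change 1 with (INR 1)|]; apply le_INR; lia).
  pose proof (pos_INR p).
  destruct neumann_offsets as [Edi [Eli [Eri [Edj [Elj Erj]]]]].
  rewrite RInt_neumann_images_reflect. unfold J.
  replace (INR i - INR j) with (IZR di - IZR dj) by lra.
  replace (INR i + INR j - 1 - 2 * INR n) with (IZR di - IZR rj) by lra.
  replace (INR i + INR j - 1) with (IZR di - IZR lj) by lra.
  rewrite <- (RInt_bdiff_shift_mult q r di dj (A - INR n) (B + INR n)),
    <- (RInt_bdiff_shift_mult q r di lj (A - INR n) B),
    <- (RInt_bdiff_shift_mult q r di rj A (B + INR n)) by (rewrite ?Hqr; unfold A, B; lra).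
  assert (HJ := ex_RInt_bdiff_shift_mult q r).
  rewrite <- (RInt_RChasles _ (A - INR n) A (B + INR n)), <- (RInt_RChasles _ A B (B + INR n)),
    <- (RInt_RChasles _ (A - INR n) A B), <- (RInt_RChasles _ A B (B + INR n)) by apply HJ.
  lra.
Qed.

End Stiffness.

Lemma bdiff_autocorr_opp (q r : nat) (x : R) : bdiff_autocorr q r (- x) = bdiff_autocorr q r x.
Proof.
  unfold bdiff_autocorr. f_equal.
  transitivity ((-1) ^ (r + r) * bdiff (q + q + 1) (r + r) (INR (q + r) + 1 + x)).
  - rewrite <- bdiff_reflect by (left; lia).
    f_equal. rewrite !plus_INR. simpl. ring.
  - rewrite pow_add, <- Rpow_mult_distr. replace (-1 * -1) with 1 by ring.
    rewrite pow1. ring.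
Qed.

Lemma bdiff_autocorr_alpha (p r k : nat) :
  (r <= p)%nat -> bdiff_autocorr (p - r) r (INR k) = alpha p r k.
Proof.
  intros Hr. rewrite <- bdiff_autocorr_opp. unfold bdiff_autocorr, alpha.
  replace (p - r + r)%nat with p by lia.
  replace (p - r + (p - r) + 1)%nat with (2 * p + 1 - 2 * r)%nat by lia.
  replace (r + r)%nat with (2 * r)%nat by lia.
  destruct (Nat.leb k p) eqn:E.
  - now rewrite Derive_n_cardB by lia.
  - apply Nat.leb_gt in E. apply le_INR in E. rewrite S_INR in E.
    destruct (Req_dec (INR k) (INR p + 1)) as [Hk|Hk].
    + replace (INR p + 1 + - INR k) with 0 by lra. rewrite bdiff_at0 by lia. ring.
    + rewrite bdiff_eq0_neg by lra. ring.
Qed.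

Lemma Tmat_Hmat_alpha (p n r i j : nat) : (r <= p)%nat -> (1 <= i <= n)%nat -> (1 <= j <= n)%nat ->
  Tmat (alpha p r) i j + Hmat (alpha p r) n i j
  = bdiff_autocorr (p - r) r (INR i - INR j) + bdiff_autocorr (p - r) r (INR i + INR j - 1)
    + bdiff_autocorr (p - r) r (INR i + INR j - 1 - 2 * INR n).
Proof.
  intros Hr Hi Hj. unfold Tmat, Hmat.
  assert (ET : alpha p r (if Nat.leb i j then (j - i)%nat else (i - j)%nat)
               = bdiff_autocorr (p - r) r (INR i - INR j)).
  { rewrite <- bdiff_autocorr_alpha by exact Hr. destruct (Nat.leb i j) eqn:E.
    - apply Nat.leb_le in E. rewrite <- bdiff_autocorr_opp, minus_INR by exact E.
      f_equal. ring.
    - apply Nat.leb_gt in E. now rewrite minus_INR by lia. }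
  assert (EH1 : alpha p r (i + j - 1) = bdiff_autocorr (p - r) r (INR i + INR j - 1)).
  { rewrite <- bdiff_autocorr_alpha, minus_INR, plus_INR by lia. reflexivity. }
  assert (EH2 : alpha p r (2 * n + 1 - i - j)
                = bdiff_autocorr (p - r) r (INR i + INR j - 1 - 2 * INR n)).
  { rewrite <- bdiff_autocorr_alpha, <- bdiff_autocorr_opp by exact Hr.
    replace (2 * n + 1 - i - j)%nat with (2 * n + 1 - (i + j))%nat by lia.
    rewrite minus_INR, !plus_INR, mult_INR by lia. f_equal. simpl. ring. }
  rewrite ET, EH1, EH2. ring.
Qed.

Lemma powerRZ_2r_minus_1 (x : R) (r : nat) :
  x <> 0 -> powerRZ x (2 * Z.of_nat r - 1) = x ^ r * x ^ r * / x.
Proof.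
  intros Hx. replace (2 * Z.of_nat r - 1)%Z with (Z.of_nat (r + r) + (-1))%Z by lia.
  rewrite powerRZ_add, <- pow_powerRZ, pow_add by exact Hx. simpl. field. exact Hx.
Qed.

Theorem mainTheorem6 (p n r : nat) :
  (1 <= p)%nat -> (1 <= n)%nat -> (r <= p)%nat ->
  (Nat.max (2 * p - p / 2) (2 * p - 2 * (p / 2) + 1) <= n)%nat ->
  forall i j : nat, (1 <= i <= n)%nat -> (1 <= j <= n)%nat ->
  Xmat p r n i j
  = powerRZ (INR n) (2 * Z.of_nat r - 1)%Z
    * (Tmat (alpha p r) i j + Hmat (alpha p r) n i j).
Proof.
  intros Hp Hn1 Hr Hmax i j Hi Hj.
  assert (Hn : (p + 1 <= n)%nat) by (pose proof (Nat.Div0.mul_div_le p 2); lia).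
  rewrite Xmat_eq_RInt, RInt_neumann_images_fold, Tmat_Hmat_alpha by assumption.
  rewrite powerRZ_2r_minus_1 by (apply not_0_INR; lia).
  reflexivity.
Qed.
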